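(* Let $p$ be a prime, $\alpha,\beta\ge1$, $x_0\in\mathbb{Z}_{p^\alpha}$, and let $\hat x_0\in\{0,\dots,p^\alpha-1\}$ be its least nonnegative representative. Let $\binom{0}{X-x_0}_{p^\alpha,p^\beta}$ be the map $\mathbb{Z}\to\mathbb{Z}_{p^\beta}$ with value $1$ at $x\equiv x_0\pmod{p^\alpha}$ and $0$ elsewhere. Then, with $d:=p^\alpha-1+(\beta-1)(p-1)p^{\alpha-1}$, $$\binom{0}{X-x_0}_{p^\alpha,p^\beta}=\sum_{\delta=0}^d\binom{\delta}{\delta-x_0}_{p^\alpha,p^\beta}\binom{X}{\delta}\in\mathbb{Z}_{p^\beta}\binom{X}{\mathbb{Z}_{p^\alpha}},$$ where $\delta-x_0$ is the residue class of $\delta-\hat x_0$ modulo $p^\alpha$. For $\beta=1$ this specializes to $$\binom{0}{X-x_0}_{p^\alpha,p}=\sum_{\delta=\hat x_0}^{p^\alpha-1}(-1)^{\delta-\hat x_0}\binom{\delta}{\delta-\hat x_0}\binom{X}{\delta}\quad(\text{coefficients mod }p),$$ and in particular $\binom{0}{X}_{p^\alpha,p}=\binom{X}{0}-\binom{X}{1}+\binom{X}{2}\mp\cdots+(-1)^{p^\alpha-1}\binom{X}{p^\alpha-1}$ over $\mathbb{Z}_p$.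
   Context: $\mathbb{Z}_r=\mathbb{Z}/r\mathbb{Z}$; $\binom{X}{\delta}=X(X-1)\cdots(X-\delta+1)/\delta!$, $\binom{X}{0}=1$. For integers $d\ge0$, $q\ge1$, $r\ge0$ and $x\in\mathbb{Z}_q$: $\binom{d}{x}_q:=\sum_{\hat x\in x,\,\hat x\ge0}(-1)^{\hat x}\binom{d}{\hat x}\in\mathbb{Z}$ and $\binom{d}{x}_{q,r}:=\binom{d}{x}_q+r\mathbb{Z}$. An equality between a map $\mathbb{Z}\to\mathbb{Z}_r$ and a polyfract $\sum_\delta P_\delta\binom{X}{\delta}$ ($P_\delta\in\mathbb{Z}_r$) means the map equals $x\mapsto\sum_\delta\binom{x}{\delta}P_\delta$. $\mathbb{Z}_r\binom{X}{\mathbb{Z}_q}$ denotes the set of such polyfracts whose map is $q$-periodic. *)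

(* Values in Z_r are represented by integers, equalities in
   Z_r by congruences mod r (intdiv). *)
From HB Require Import structures.
From mathcomp Require Import all_boot all_order all_algebra.
Set Implicit Arguments. Unset Strict Implicit. Unset Printing Implicit Defensive.
Import Order.TTheory GRing.Theory Num.Theory.
Local Open Scope ring_scope.

Definition binz (x : int) (k : nat) : int :=
  ((\prod_(i < k) (x - (i : nat)%:Z)) %/ (k`!)%:Z)%Z.

(* binq d q x = binom(d, x)_q = sum over nonnegative representatives xh of the
   class of x modulo q of (-1)^xh * C(d, xh).  Since C(d, xh) = 0 for xh > d,
   only xh in 0..d contribute. *)
Definition binq (d q : nat) (x : int) : int :=
  \sum_(0 <= k < d.+1 | (k%:Z == x %[mod q%:Z])%Z) (-1) ^+ k * ('C(d, k))%:Z.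

Definition indic (q : nat) (x0 x : int) : int :=
  if (x == x0 %[mod q%:Z])%Z then 1 else 0.

Definition pfeval (P : nat -> int) (d : nat) (x : int) : int :=
  \sum_(0 <= δ < d.+1) binz x δ * P δ.

From HB Require Import structures.
From mathcomp Require Import all_boot all_order all_algebra.
From mathcomp Require Import zify ring.
Set Implicit Arguments. Unset Strict Implicit. Unset Printing Implicit Defensive.
Import Order.TTheory GRing.Theory Num.Theory.
Local Open Scope ring_scope.

(* The proof works with the difference operator Delta n = (1 - E)^n, E the
   shift x |-> x + 1.  Delta lowers the binomial polynomials binom(X, δ), so
   Delta δ g 0 = (-1)^δ binq δ q (δ - x0) for δ <= d and Delta δ g = 0 for
   δ > d; on the other side Delta n f y = binq n q (x0 - y).  By the symmetry
   of binomial coefficients the differences of f and g at 0 agree up to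
   order d.  Above order d, p^beta divides Delta n f: this comes from the
   congruence (1 - X)^(d+1) = 0 modulo the ideal (p^beta, X^q - 1) of Z[X],
   proved from Frobenius-type congruences for (x - 1)^(p^j) in any
   commutative ring.  Newton's forward expansion then gives f = g modulo
   p^beta on the naturals, and the vanishing of Delta (d+1) (g - f) modulo
   p^beta propagates this to all integers.  Periodicity is inherited from f,
   and for beta = 1 the coefficients are computed in closed form. *)

Definition ffact (x : int) (k : nat) : int := \prod_(i < k) (x - (i : nat)%:Z).

Lemma ffactSl x k : ffact (x + 1) k.+1 = (x + 1) * ffact x k.
Proof.
rewrite /ffact big_ord_recl subr0; congr (_ * _).
by apply: eq_bigr => i _; rewrite lift0 -addn1 PoszD; ring.
Qed.

Lemma ffactSr x k : ffact x k.+1 = ffact x k * (x - k%:Z).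
Proof. by rewrite /ffact big_ord_recr. Qed.

Lemma ffact_diff x k : ffact (x + 1) k.+1 - ffact x k.+1 = k.+1%:Z * ffact x k.
Proof. by rewrite ffactSl ffactSr -[k.+1]addn1 PoszD; ring. Qed.

Lemma dvdz_fact_ffact k x : ((k`!)%:Z %| ffact x k)%Z.
Proof.
elim: k x => [|k IH] x; first by rewrite /ffact big_ord0 dvdz1.
have step y : ((k.+1`!)%:Z %| ffact y k.+1)%Z = ((k.+1`!)%:Z %| ffact (y + 1) k.+1)%Z.
  have -> : ffact (y + 1) k.+1 = ffact y k.+1 + k.+1%:Z * ffact y k.
    by rewrite -ffact_diff; ring.
  by rewrite rpredDr // factS PoszM dvdz_mul2l.
elim/int_rec: x => [|n IHn|n IHn].
- by rewrite /ffact big_ord_recl subr0 mul0r dvdz0.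
- by rewrite -addn1 PoszD -step.
- by rewrite step (_ : - n.+1%:Z + 1 = - n%:Z) // -addn1 PoszD; ring.
Qed.

Lemma ffact_binz x k : ffact x k = binz x k * (k`!)%:Z.
Proof.
have /dvdzP [c Hc] := dvdz_fact_ffact k x.
by rewrite /binz -/(ffact x k) Hc mulzK // eqz_nat -lt0n fact_gt0.
Qed.

Lemma binz0 x : binz x 0 = 1.
Proof. by rewrite /binz big_ord0. Qed.

Lemma binz0n k : binz 0 k = (k == 0)%:R.
Proof. by case: k => [|k]; rewrite ?binz0 // /binz big_ord_recl subr0 mul0r div0z. Qed.

Lemma binz_pascal y k : binz (y + 1) k.+1 = binz y k.+1 + binz y k.
Proof.
have := ffact_diff y k; rewrite !ffact_binz factS PoszM => E.
have nz : k.+1%:Z * (k`!)%:Z != 0.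
  by rewrite mulf_eq0 negb_or !eqz_nat -!lt0n fact_gt0.
apply: (mulIf nz); rewrite -[LHS](subrK (binz y k.+1 * (k.+1%:Z * (k`!)%:Z))) E.
ring.
Qed.

Lemma pascal_sum (a : nat -> int) n :
  \sum_(0 <= i < n.+2) ('C(n.+1, i))%:Z * a i =
  \sum_(0 <= i < n.+1) ('C(n, i))%:Z * a i +
  \sum_(0 <= i < n.+1) ('C(n, i))%:Z * a i.+1.
Proof.
rewrite big_nat_recl //.
under eq_bigr do rewrite binS PoszD mulrDl.
rewrite big_split /= addrA; congr (_ + _).
rewrite [X in _ = X]big_nat_recl // [X in _ + X = _]big_nat_recr //=.
by rewrite (@bin_small n n.+1) // mul0r addr0 !bin0.
Qed.

(* Delta n F = (1 - E)^n F, the n-th iterate of F |-> F - F(. + 1), where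
   E is the shift y |-> y + 1. *)
Definition Delta (n : nat) (F : int -> int) (y : int) : int :=
  \sum_(0 <= i < n.+1) (-1) ^+ i * ('C(n, i))%:Z * F (y + i%:Z).

Lemma Delta0 F y : Delta 0 F y = F y.
Proof. by rewrite /Delta big_nat1 expr0 bin0 !mul1r addr0. Qed.

Lemma DeltaS n F y : Delta n.+1 F y = Delta n F y - Delta n F (y + 1).
Proof.
rewrite /Delta.
have := pascal_sum (fun i => (-1) ^+ i * F (y + i%:Z)) n.
under eq_bigr do rewrite mulrA [_ * (-1) ^+ _]mulrC.
move=> ->; congr (_ + _).
  by apply: eq_bigr => i _; rewrite mulrA [_ * (-1) ^+ _]mulrC.
rewrite -sumrN; apply: eq_bigr => i _.
by rewrite exprS -addn1 PoszD addrA [y + 1 + _]addrAC; ring.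
Qed.

Lemma DeltaB n F G y :
  Delta n (fun x => F x - G x) y = Delta n F y - Delta n G y.
Proof. by rewrite /Delta -sumrB; apply: eq_bigr => i _; ring. Qed.

Lemma Delta_pfeval n P d y :
  Delta n (pfeval P d) y = \sum_(0 <= δ < d.+1) Delta n (binz^~ δ) y * P δ.
Proof.
rewrite /Delta /pfeval.
under eq_bigr do rewrite big_distrr.
rewrite exchange_big /=; apply: eq_bigr => δ _.
by rewrite big_distrl /=; apply: eq_bigr => i _; ring.
Qed.

Lemma Delta_binz n δ y :
  Delta n (binz^~ δ) y = if (n <= δ)%N then (-1) ^+ n * binz y (δ - n) else 0.
Proof.
elim: n y => [|n IH] y; first by rewrite Delta0 expr0 mul1r subn0.
rewrite DeltaS !IH.
have [le_nδ|lt_δn] := leqP n δ; last by rewrite ifF //; lia.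
have [lt_nδ|le_δn] := leqP n.+1 δ.
  by rewrite (_ : (δ - n = (δ - n.+1).+1)%N) ?binz_pascal ?exprS; [ring | lia].
by rewrite (_ : δ = n) ?subnn ?binz0 ?subrr //; lia.
Qed.

Lemma Delta_pfeval_low P d δ : (δ <= d)%N -> Delta δ (pfeval P d) 0 = (-1) ^+ δ * P δ.
Proof.
move=> le_δd; rewrite Delta_pfeval (bigD1_seq δ); last 2 first.
- by rewrite mem_index_iota; lia.
- exact: iota_uniq.
rewrite /= Delta_binz leqnn subnn binz0n mulr1 big1_seq ?addr0 // => i /andP [ne_iδ _].
rewrite Delta_binz binz0n; case: leqP => [le_δi|_]; last by rewrite mul0r.
by rewrite subn_eq0 leqNgt ltn_neqAle eq_sym ne_iδ le_δi mulr0 mul0r.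
Qed.

Lemma Delta_pfeval_high P d δ y : (d < δ)%N -> Delta δ (pfeval P d) y = 0.
Proof.
move=> lt_dδ; rewrite Delta_pfeval big1_seq // => i /andP [_].
by rewrite mem_index_iota Delta_binz => lt_id; rewrite ifF ?mul0r //; lia.
Qed.

Lemma newton F n y :
  F (y + n%:Z) = \sum_(0 <= δ < n.+1) ('C(n, δ))%:Z * ((-1) ^+ δ * Delta δ F y).
Proof.
elim: n y => [|n IH] y.
  by rewrite big_nat1 bin0 expr0 !mul1r Delta0 addr0.
rewrite pascal_sum (_ : y + n.+1%:Z = (y + 1) + n%:Z); last first.
  by rewrite -addn1 PoszD; ring.
rewrite IH -big_split /=; apply: eq_bigr => i _.
have -> : Delta i F (y + 1) = Delta i F y - Delta i.+1 F y by rewrite DeltaS; ring.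
by rewrite exprS; ring.
Qed.

Lemma dvdz_on_nat (r : int) (h : int -> int) :
  (forall δ, (r %| Delta δ h 0)%Z) -> forall n : nat, (r %| h n%:Z)%Z.
Proof.
move=> dvd_Delta n; rewrite -[n%:Z]add0r newton.
by apply: rpred_sum => δ _; rewrite !dvdz_mull.
Qed.

Lemma dvdz_everywhere (r : int) (m : nat) (h : int -> int) :
  (forall y, (r %| Delta m h y)%Z) -> (forall n : nat, (r %| h n%:Z)%Z) ->
  forall x, (r %| h x)%Z.
Proof.
move=> dvd_Delta dvd_nat.
suff dvd_above k z : - k%:Z <= z -> (r %| h z)%Z by move=> x; apply: (dvd_above `|x|%N); lia.
elim: k z => [|k IH] z le_kz.
  by rewrite -(gez0_abs (_ : 0 <= z)) ?dvd_nat //; lia.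
have [|lt_zk] := lerP (- k%:Z) z; first exact: IH.
have := dvd_Delta z; rewrite /Delta big_nat_recl // expr0 bin0 !mul1r addr0.
rewrite rpredDr // rpred_sum // => i _; apply/dvdz_mull/IH; lia.
Qed.

Lemma Delta_indic q x0 n y : Delta n (indic q x0) y = binq n q (x0 - y).
Proof.
rewrite /Delta /binq [RHS]big_mkcond /=; apply: eq_bigr => i _.
rewrite /indic -[in RHS](eqz_modDl y) [y + (x0 - y)]addrC subrK.
by case: ifP; rewrite ?mulr1 ?mulr0.
Qed.

Lemma sign_subn n i : (i <= n)%N -> (-1) ^+ (n - i) = (-1) ^+ n * (-1) ^+ i :> int.
Proof.
move=> le_in; rewrite -{2}(subnK le_in) exprD -mulrA -exprD addnn -muln2.
by rewrite mulnC exprM sqrrN !expr1n mulr1.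
Qed.

(* The symmetry C(n, k) = C(n, n - k) of binomial coefficients, for binq. *)
Lemma binq_rev n q x : binq n q (n%:Z - x) = (-1) ^+ n * binq n q x.
Proof.
rewrite /binq big_nat_rev /= big_distrr /= !big_mkcond [RHS]big_mkcond /=.
apply: eq_big_nat => i /andP [_ lt_in]; rewrite add0n subSS.
have -> : ((n - i)%N%:Z == n%:Z - x %[mod q%:Z])%Z = (i%:Z == x %[mod q%:Z])%Z.
  rewrite !eqz_mod_dvd -subzn // rpredBC.
  by rewrite (_ : n%:Z - x - (n%:Z - i%:Z) = i%:Z - x) //; ring.
by case: ifP => // _; rewrite bin_sub // sign_subn // mulrA.
Qed.

(* For δ < q the residue class of y has at most one representative in
   [0, δ], namely the least nonnegative residue of y. *)
Lemma binq_small δ q y : (δ < q)%N ->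
  let m := `|(y %% q%:Z)%Z|%N in
  binq δ q y = if (m <= δ)%N then (-1) ^+ m * ('C(δ, m))%:Z else 0.
Proof.
move=> lt_δq m.
have m_ge0 : 0 <= (y %% q%:Z)%Z by apply: modz_ge0; rewrite eqz_nat; lia.
have mE : m%:Z = (y %% q%:Z)%Z by rewrite /m; lia.
rewrite /binq big_mkord (eq_bigl (fun k : 'I_δ.+1 => k == m :> nat)).
  by rewrite (big_ord1_eq _ (fun k => (-1) ^+ k * ('C(δ, k))%:Z)).
move=> k /=; rewrite -mE -eqz_nat.
by rewrite modz_small //; apply/andP; split; [|have := ltn_ord k]; lia.
Qed.

Lemma binq_shift_small δ q x0 : (δ < q)%N ->
  let h := `|(x0 %% q%:Z)%Z|%N in
  binq δ q (δ%:Z - x0) =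
  if (h <= δ)%N then (-1) ^+ (δ - h) * ('C(δ, δ - h))%:Z else 0.
Proof.
move=> lt_δq h; rewrite binq_small //.
have h_ge0 : 0 <= (x0 %% q%:Z)%Z by apply: modz_ge0; rewrite eqz_nat; lia.
have h_lt : (x0 %% q%:Z)%Z < q%:Z by apply: ltz_pmod; rewrite ltz_nat; lia.
have hE : h%:Z = (x0 %% q%:Z)%Z by rewrite /h; lia.
have -> : ((δ%:Z - x0) %% q%:Z)%Z = ((δ%:Z - h%:Z) %% q%:Z)%Z.
  by rewrite hE -modzDmr -modzNm modzDmr.
have [le_hδ|lt_δh] := leqP h δ.
  rewrite modz_small; last by lia.
  by rewrite (_ : `|δ%:Z - h%:Z|%N = (δ - h)%N) ?leq_subr //; lia.
rewrite -(modzDr _ q%:Z) modz_small; last by lia.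
by rewrite ifF //; lia.
Qed.

Section PrimePowerCongruences.
Variable R : comNzRingType.

Lemma expr_add_sq (u w : R) n : exists k,
  (u + w) ^+ n.+1 = u ^+ n.+1 + n.+1%:R * u ^+ n * w + w ^+ 2 * k.
Proof.
elim: n => [|n [k Hk]].
  by exists 0; rewrite expr1 expr0 mulr1 mulr0 addr0 mul1r.
exists (u * k + n.+1%:R * u ^+ n + w * k).
by rewrite exprS Hk !exprS -[n.+2]addn1 natrD -[n.+1]addn1 natrD; ring.
Qed.

(* Since p divides C(p, i) for 0 < i < p: (U + 1)^p = U^p + 1 modulo p U. *)
Lemma exprD1_prime (p : nat) (U : R) : prime p -> exists g,
  (U + 1) ^+ p = U ^+ p + 1 + p%:R * U * g.
Proof.
case: p => [//|n] pp.
rewrite exprD1n big_ord_recl big_ord_recr /= bin0 binn expr0 !mulr1n.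
exists (\sum_(i < n) U ^+ i *+ ('C(n.+1, i.+1) %/ n.+1)).
rewrite mulr_sumr.
have -> : \sum_(i < n) U ^+ bump 0 i *+ 'C(n.+1, bump 0 i) =
          \sum_(i < n) n.+1%:R * U * (U ^+ i *+ ('C(n.+1, i.+1) %/ n.+1)).
  apply: eq_bigr => i _.
  have dvd_bin : (n.+1 %| 'C(n.+1, i.+1))%N.
    by apply: prime_dvd_bin => //; rewrite /= ltnS ltn_ord.
  rewrite /bump /= add1n -{1}(divnK dvd_bin) mulrnA exprS.
  by rewrite -[U ^+ i *+ _]mulr_natl -[_ *+ n.+1]mulr_natl; ring.
by rewrite /bump /= add1n; set S := \sum_(i < n) _; ring.
Qed.

Lemma frobenius_sub1 (p : nat) (x : R) : prime p -> forall j, exists e,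
  (x - 1) ^+ (p ^ j) = x ^+ (p ^ j) - 1 + p%:R * e.
Proof.
move=> pp; elim=> [|j [e He]]; first by exists 0; rewrite expn0 !expr1 mulr0 addr0.
have [g Hg] := exprD1_prime (x ^+ (p ^ j) - 1) pp; rewrite subrK in Hg.
case: p pp Hg He => [//|n] pp Hg He.
have [k Hk] := expr_add_sq (x ^+ (n.+1 ^ j) - 1) (n.+1%:R * e) n.
exists (- (x ^+ (n.+1 ^ j) - 1) * g + (x ^+ (n.+1 ^ j) - 1) ^+ n * e * n.+1%:R
        + n.+1%:R * e ^+ 2 * k).
rewrite expnSr !exprM He Hk Hg; ring.
Qed.

Lemma frobenius_lift (p : nat) (x : R) (j : nat) : prime p -> exists v w,
  ((x - 1) ^+ (p ^ j)) ^+ p =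
  x ^+ (p ^ j * p) - 1 + p%:R * (x - 1) ^+ (p ^ j) * v + p%:R ^+ 2 * w.
Proof.
case: p => [//|n] pp; have [e He] := frobenius_sub1 x pp j.
set T := x ^+ (n.+1 ^ j) in He.
have [g Hg] := exprD1_prime (T - 1) pp; rewrite subrK in Hg.
have [k Hk] := expr_add_sq (T - 1) (n.+1%:R * e) n.
exists (- g), ((T - 1) ^+ n * e + e ^+ 2 * k + e * g).
rewrite He Hk exprM -/T Hg; ring.
Qed.

Lemma power_in_ideal (Z Phi P u v w : R) (m : nat) :
  Z ^+ m.+2 = Phi * u + P * Z * v + P ^+ 2 * w ->
  forall k, exists a b c, Z ^+ (1 + k * m.+1) = P ^+ k * (Z * a + P * b) + Phi * c.
Proof.
move=> HZ; elim=> [|k [a [b [c E]]]].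
  by exists 1, 0, 0; rewrite mul0n addn0 expr1 expr0; ring.
exists (v * a + Z ^+ m * b), (w * a), (P ^+ k * u * a + Z ^+ m.+1 * c).
rewrite (_ : 1 + k.+1 * m.+1 = m.+1 + (1 + k * m.+1))%N; last by lia.
rewrite exprD E.
have HZ' : Z ^+ m.+1 * Z = Phi * u + P * Z * v + P ^+ 2 * w by rewrite -exprSr.
transitivity (P ^+ k * (Z ^+ m.+1 * Z) * a + P ^+ k * P * Z ^+ m.+1 * b
              + Phi * Z ^+ m.+1 * c); first by ring.
by rewrite HZ' [in P ^+ k * P * _]exprSr [P ^+ k.+1]exprSr; ring.
Qed.

End PrimePowerCongruences.

Lemma coef_1subX n k : ((1 - 'X : {poly int}) ^+ n)`_k = (-1) ^+ k * ('C(n, k))%:Z.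
Proof.
elim: n k => [|n IH] k.
  by rewrite expr0 coef1; case: k => [|k] //=; rewrite bin0n mulr0.
rewrite exprS mulrBl mul1r coefB coefXM IH.
case: k => [|k] /=; first by rewrite subr0 !bin0.
by rewrite IH binS PoszD exprS; ring.
Qed.

Lemma sum_residue_coefXnM (q N : nat) (a : int) (C : {poly int}) :
  (size C + q <= N)%N ->
  \sum_(0 <= k < N | (k%:Z == a %[mod q%:Z])%Z) ('X^q * C)`_k =
  \sum_(0 <= k < N | (k%:Z == a %[mod q%:Z])%Z) C`_k.
Proof.
move=> le_N; rewrite !big_mkcond /= (@big_cat_nat _ _ _ q) /=; [|lia|lia].
rewrite big1_seq ?add0r; last first.
  move=> i /andP [_]; rewrite mem_index_iota => /andP [_ lt_iq].
  by rewrite coefXnM lt_iq; case: ifP.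
rewrite -{1}[q]add0n big_addn [RHS](@big_cat_nat _ _ _ (N - q)) /=; [|lia|lia].
rewrite [X in _ = _ + X]big1_seq ?addr0; last first.
  move=> i /andP [_]; rewrite mem_index_iota => /andP [le_i _].
  have le_sizeC : (size C <= N - q)%N by lia.
  by rewrite nth_default ?if_same //; exact: leq_trans le_sizeC le_i.
rewrite [RHS]big_mkcond; apply: eq_bigr => i _.
by rewrite coefXnM ltnNge leq_addl /= addnK PoszD modzDr.
Qed.

Lemma one_subX_in_ideal p alpha beta : prime p -> (1 <= alpha)%N ->
  exists W C : {poly int}, (1 - 'X) ^+ (p ^ (alpha - 1) * (1 + beta * (p - 1))) =
                            (p ^ beta)%:R * W + ('X^(p ^ alpha) - 1) * C.
Proof.
move=> pp alpha_gt0.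
have [v [w Hp]] := frobenius_lift ('X : {poly int}) (alpha - 1) pp.
rewrite -expnSr (_ : (alpha - 1).+1 = alpha) in Hp; last by lia.
have p_gt1 := prime_gt1 pp.
case: p pp p_gt1 v w Hp => [//|[//|n]] pp _ v w Hp.
rewrite -[X in _ = X + _ + _]mulr1 in Hp.
have [a [b [c E]]] := power_in_ideal Hp beta.
set s := (n.+2 ^ (alpha - 1))%N in E *.
exists ((-1) ^+ (s * (1 + beta * n.+1)) * (('X - 1) ^+ s * a + n.+2%:R * b)).
exists ((-1) ^+ (s * (1 + beta * n.+1)) * c).
rewrite (_ : 1 - 'X = - ('X - 1)); last by ring.
by rewrite [LHS]exprNn [in X in _ * X = _]exprM (_ : (n.+2 - 1 = n.+1)%N) // E natrX; ring.
Qed.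

Lemma dvdz_binq_core p alpha beta (x : int) : prime p -> (1 <= alpha)%N ->
  ((p ^ beta)%:Z %| binq (p ^ (alpha - 1) * (1 + beta * (p - 1))) (p ^ alpha) x)%Z.
Proof.
move=> pp alpha_gt0; have [W [C E]] := one_subX_in_ideal beta pp alpha_gt0.
set D := (p ^ (alpha - 1) * _)%N in E *; set q := (p ^ alpha)%N in E *.
set N := (D.+1 + size W + size C + q)%N.
have -> : binq D q x =
          \sum_(0 <= k < N | (k%:Z == x %[mod q%:Z])%Z) ((1 - 'X) ^+ D)`_k.
  rewrite /binq [RHS](@big_cat_nat _ _ _ D.+1) /=; [|lia|lia].
  rewrite [X in _ = _ + X]big1_seq ?addr0; last first.
    move=> i /andP [_]; rewrite mem_index_iota => /andP [lt_Di _].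
    by rewrite coef_1subX bin_small ?mulr0.
  by apply: eq_bigr => i _; rewrite coef_1subX.
rewrite E.
under eq_bigr do rewrite coefD mulr_natl coefMn mulrBl coefB mul1r.
rewrite big_split big_split /= sum_residue_coefXnM; last by rewrite /N; lia.
by rewrite sumrN addrN addr0 sumrMnl -mulr_natr natz dvdz_mull.
Qed.

Lemma degree_succ p alpha beta : (0 < p)%N -> (1 <= alpha)%N -> (1 <= beta)%N ->
  (p ^ alpha - 1 + (beta - 1) * (p - 1) * p ^ (alpha - 1)).+1 =
  (p ^ (alpha - 1) * (1 + beta * (p - 1)))%N.
Proof.
move=> p_gt0 alpha_gt0 beta_gt0.
have -> : (p ^ alpha = p ^ (alpha - 1) * p)%N by rewrite -expnSr subn1 prednK.
have : (0 < p ^ (alpha - 1))%N by rewrite expn_gt0 p_gt0.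
move: (p ^ (alpha - 1))%N => s; nia.
Qed.

Lemma dvdz_Delta_indic p alpha beta x0 n y : prime p -> (1 <= alpha)%N ->
  (p ^ (alpha - 1) * (1 + beta * (p - 1)) <= n)%N ->
  ((p ^ beta)%:Z %| Delta n (indic (p ^ alpha) x0) y)%Z.
Proof.
move=> pp alpha_gt0 /subnK <-; elim: (n - _)%N y => [|k IH] y.
  by rewrite add0n Delta_indic dvdz_binq_core.
by rewrite addSn DeltaS rpredB.
Qed.

Lemma main_congruence p alpha beta x0 : prime p -> (1 <= alpha)%N -> (1 <= beta)%N ->
  let q := (p ^ alpha)%N in
  let d := (q - 1 + (beta - 1) * (p - 1) * p ^ (alpha - 1))%N in
  forall x, (indic q x0 x =
    pfeval (fun δ => binq δ q (δ%:Z - x0)) d x %[mod (p ^ beta)%:Z])%Z.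
Proof.
move=> pp alpha_gt0 beta_gt0 q d x; apply/eqP; rewrite eqz_mod_dvd rpredBC.
set P := fun δ : nat => _; pose h y := pfeval P d y - indic q x0 y.
have dvd_high δ y : (d < δ)%N -> ((p ^ beta)%:Z %| Delta δ h y)%Z.
  move=> lt_dδ; rewrite DeltaB Delta_pfeval_high // sub0r rpredN.
  by apply: dvdz_Delta_indic; rewrite // -(degree_succ (prime_gt0 pp) alpha_gt0 beta_gt0).
apply: (dvdz_everywhere (m := d.+1) (h := h)) => [y|]; first exact: dvd_high.
apply: dvdz_on_nat => δ; have [le_δd|] := leqP δ d; last exact: dvd_high.
(* the coefficients are chosen so that the differences of order <= d agree *)
rewrite DeltaB Delta_pfeval_low // Delta_indic /P binq_rev subr0.
by rewrite signrMK subrr dvdz0.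
Qed.

(* The indicator is q-periodic, hence so is any polyfract agreeing with it. *)
Lemma indic_periodic q x0 x : indic q x0 (x + q%:Z) = indic q x0 x.
Proof. by rewrite /indic modzDr. Qed.

Lemma indicator_mod_p p alpha x0 : prime p -> (1 <= alpha)%N ->
  let q := (p ^ alpha)%N in
  let h := `|(x0 %% q%:Z)%Z|%N in
  forall x : int, (indic q x0 x =
    \sum_(h <= δ < q) (-1) ^+ (δ - h) * ('C(δ, δ - h))%:Z * binz x δ %[mod p%:Z])%Z.
Proof.
move=> pp alpha_gt0 q h x.
rewrite (main_congruence x0 pp alpha_gt0 (leqnn 1)) expn1 -/q /pfeval.
have q_gt0 : (0 < q)%N by rewrite expn_gt0 prime_gt0.
have lt_hq : (h < q)%N.
  have : (x0 %% q%:Z)%Z < q%:Z by apply: ltz_pmod; rewrite ltz_nat.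
  have : 0 <= (x0 %% q%:Z)%Z by apply: modz_ge0; rewrite eqz_nat -lt0n.
  by rewrite /h; lia.
rewrite (_ : _.+1 = q); last by lia.
rewrite (@big_cat_nat _ _ _ h) /=; [|lia|lia].
rewrite big1_seq ?add0r; last first.
  move=> i /andP [_]; rewrite mem_index_iota => /andP [_ lt_ih].
  by rewrite binq_shift_small ?(ltn_trans lt_ih) // -/q -/h leqNgt lt_ih mulr0.
congr (_ %% _)%Z; apply: eq_big_nat => i /andP [le_hi lt_iq].
by rewrite binq_shift_small -/q -/h // le_hi mulrC.
Qed.

Theorem theorem3p6 (p alpha beta : nat) (x0 : int) :
  prime p -> (1 <= alpha)%N -> (1 <= beta)%N ->
  let q := (p ^ alpha)%N in
  let r := (p ^ beta)%N in
  let d := (q - 1 + (beta - 1) * (p - 1) * p ^ (alpha - 1))%N in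
  let x0h := `|(x0 %% q%:Z)%Z|%N in
  let P := fun δ : nat => binq δ q (δ%:Z - x0) in
  (* main identity, as maps Z -> Z_r *)
  (forall x : int, indic q x0 x = pfeval P d x %[mod r%:Z])%Z
  (* the polyfract lies in Z_r binom(X, Z_q): its map is q-periodic *)
  /\ (forall x : int, pfeval P d (x + q%:Z) = pfeval P d x %[mod r%:Z])%Z
  (* specialization beta = 1 *)
  /\ (beta = 1%N -> forall x : int,
        indic q x0 x =
        \sum_(x0h <= δ < q) (-1) ^+ (δ - x0h) * ('C(δ, δ - x0h))%:Z * binz x δ
        %[mod p%:Z])%Z
  (* in particular x0 = 0 *)
  /\ (forall x : int,
        indic q 0 x = \sum_(0 <= δ < q) (-1) ^+ δ * binz x δ %[mod p%:Z])%Z.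
Proof.
move=> pp alpha_gt0 beta_gt0 q r d x0h P.
have main := main_congruence x0 pp alpha_gt0 beta_gt0.
split; first exact: main.
split; first by move=> x; rewrite -(main (x + q%:Z)) -(main x) indic_periodic.
split; first by move=> _; exact: indicator_mod_p.
move=> x; rewrite (indicator_mod_p 0 pp alpha_gt0 x) mod0z /=.
by congr (_ %% _)%Z; apply: eq_bigr => i _; rewrite subn0 binn mulr1.
Qed.
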